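(* Let $\Bbbk$ be a field and $f(t)=1+\sum_{k\ge1}a_kt^k\in\Bbbk[[t]]$, with $a_0=1$. Write $\frac1{f(t)}=\sum_{k\ge0}D_k(f)t^k$. Let $P_{f,k}(t)=(-1)^k\det\begin{pmatrix} 1&a_1t&\ldots &a_kt^k\\ 1&a_1&\ldots &a_k\\ 0&1&\ldots &a_{k-1}\\ \vdots&\ddots&\ddots&\vdots\\ 0&\ldots &1&a_1 \end{pmatrix}$ for $k\ge1$, $P_{f,0}=1$. Then: (a) $P_{f,k}(t)=\sum_{j=0}^k a_jD_{k-j}(f)\,t^j$ for all $k\ge0$; (b) for any $\Bbbk$-algebra $\mathcal A$ and $x,y\in\mathcal A$, $f(x)\,y\,f(x)^{-1}=y+z_1+z_2+\cdots$, where $z_k=\sum_{i=0}^k a_iD_{k-i}(f)\,x^iyx^{k-i}$ for $k\ge1$.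
   Context: $D_k(f)$ equals $(-1)^k\det$ of the $k\times k$ Toeplitz matrix with first row $(a_1,\dots,a_k)$, and row $r\ge2$ having zeros in its first $r-2$ entries, $1$ in entry $r-1$, then $a_1,a_2,\dots$; $D_0(f)=1$. In (b) the infinite sum is understood formally, e.g. replacing $x$ by $\tau x$ for a formal variable $\tau$ and reading the identity in $\mathcal A[[\tau]]$. *)

From HB Require Import structures.
From mathcomp Require Import all_boot all_order all_algebra.
Set Implicit Arguments. Unset Strict Implicit. Unset Printing Implicit Defensive.
Import Order.TTheory GRing.Theory Num.Theory.
Local Open Scope ring_scope.

(* Formal power series over a ring R are represented by their coefficient
   sequences  nat -> R ; the product in R[[tau]] is the Cauchy product. *)
Definition ps_mul (R : pzRingType) (F G : nat -> R) : nat -> R :=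
  fun n => \sum_(i < n.+1) F i * G (n - i)%N.

Definition ps_one (R : pzRingType) : nat -> R := fun n => (n == 0%N)%:R.

(* The (k+1) x (k+1) matrix whose determinant times (-1)^k is P_{f,k}(t):
   row 0 is (a_0, a_1 t, ..., a_k t^k); row r >= 1 is
   (0,...,0, a_0 = 1 (column r-1), a_1, a_2, ...). *)
Definition Pmat (K : fieldType) (a : nat -> K) (k : nat) : 'M[{poly K}]_k.+1 :=
  \matrix_(r < k.+1, j < k.+1)
    if r == 0 :> nat then (a j)%:P * 'X^j
    else if (r.-1 <= j)%N then (a (j - r.-1)%N)%:P else 0.

Definition Pfk (K : fieldType) (a : nat -> K) (k : nat) : {poly K} :=
  (-1) ^+ k * \det (Pmat a k).

From mathcomp Require Import all_boot all_algebra.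
From mathcomp Require Import zify.
From Stdlib Require Import FunctionalExtensionality.
Set Implicit Arguments. Unset Strict Implicit. Unset Printing Implicit Defensive.
Import GRing.Theory.
Local Open Scope ring_scope.

(* (a) Multiplying the matrix of P_{f,k} on the right by the upper unitriangular
   Toeplitz matrix of 1/f turns every row r >= 1 into the unit row e_{r-1}, since
   f * (1/f) = 1; expanding along the last column leaves the (0, k) entry, which is
   sum_j a_j D_{k-j} t^j.
   (b) The inverse of f(tau x) is sum_k D_k tau^k x^k: the power series
   sum_k c_k tau^k x^k multiply like the scalar series sum_k c_k t^k, so the
   conjugate f(tau x) y f(tau x)^-1 has coefficients sum_i a_i D_{k-i} x^i y x^{k-i}. *)

Lemma ps_mulC (R : comPzRingType) : commutative (@ps_mul R).
Proof.
move=> F G; apply: functional_extensionality => n; rewrite /ps_mul.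
rewrite (reindex_inj rev_ord_inj) /=; apply: eq_bigr => i _.
by rewrite subSS subKn 1?mulrC // -ltnS.
Qed.

Section ScaledPowers.

Variables (R : comPzRingType) (A : algType R) (x : A).

Lemma ps_mul_scaled_powers (c d : nat -> R) :
  ps_mul (fun k => c k *: x ^+ k) (fun k => d k *: x ^+ k)
  = fun n => ps_mul c d n *: x ^+ n.
Proof.
apply: functional_extensionality => n; rewrite /ps_mul scaler_suml.
apply: eq_bigr => i _.
by rewrite -scalerAl -scalerAr scalerA -exprD subnKC // -ltnS.
Qed.

Lemma ps_one_scaled_powers : (fun n => ps_one R n *: x ^+ n) = ps_one A.
Proof.
apply: functional_extensionality => -[|n]; rewrite /ps_one /=.
  by rewrite scale1r expr0.
by rewrite scale0r.
Qed.

End ScaledPowers.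

Lemma ps_mul_const_r (R : pzRingType) (F : nat -> R) (y : R) :
  ps_mul F (fun k => if k == 0%N then y else 0) = fun n => F n * y.
Proof.
apply: functional_extensionality => n; rewrite /ps_mul big_ord_recr /= subnn eqxx.
rewrite big1 ?add0r // => i _.
by rewrite subn_eq0 leqNgt ltn_ord mulr0.
Qed.

Lemma sum_shifted_conv (R : pzRingType) (a D : nat -> R) (n s j : nat) :
  (j < n)%N ->
  \sum_(i < n) ((if (s <= i)%N then a (i - s)%N else 0) *
                (if (i <= j)%N then D (j - i)%N else 0))
  = if (s <= j)%N then ps_mul a D (j - s) else 0.
Proof.
move=> ljn.
pose t i := (if (s <= i)%N then a (i - s)%N else 0) *
            (if (i <= j)%N then D (j - i)%N else 0).
rewrite -(big_mkord xpredT t) (big_cat_nat _ (n := j.+1)) //=.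
have tail0 : \sum_(j.+1 <= i < n) t i = 0.
  apply: big1_seq => i; rewrite mem_index_iota => /andP[_ /andP[hi _]].
  by rewrite /t [(i <= j)%N]leqNgt hi mulr0.
rewrite tail0 addr0; case: (leqP s j) => hsj; last first.
  apply: big1_seq => i; rewrite mem_index_iota => /andP[_ hi].
  by rewrite /t leqNgt (leq_trans hi hsj) mul0r.
rewrite (big_cat_nat _ (n := s)) //=; last exact: leq_trans hsj _.
have head0 : \sum_(0 <= i < s) t i = 0.
  apply: big1_seq => i; rewrite mem_index_iota => /andP[_ /andP[_ hi]].
  by rewrite /t [(s <= i)%N]leqNgt hi mul0r.
rewrite head0 add0r -{1}(add0n s) big_addn subSn // big_mkord /ps_mul.
apply: eq_bigr => i _; have hi := ltn_ord i.
have isj : (i + s <= j)%N by lia.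
by rewrite /t leq_addl addnK isj subnDA subnAC.
Qed.

Lemma det_unit_rows_col_max (R : comPzRingType) (k : nat) (N : 'M[R]_k.+1) :
  (forall r j : 'I_k.+1, r != 0 :> nat -> N r j = (j.+1 == r)%:R) ->
  \det N = (-1) ^+ k * N 0 ord_max.
Proof.
move=> Nrow; rewrite (expand_det_col N ord_max) big_ord_recl big1 ?addr0.
  have minor1 : row' 0 (col' ord_max N) = 1%:M.
    apply/matrixP => r c; rewrite !mxE Nrow; last by rewrite lift0.
    by rewrite lift_max lift0 eqSS eq_sym.
  by rewrite /cofactor minor1 det1 mulr1 add0n mulrC.
move=> i _; rewrite Nrow ?lift0 // eqSS.
by rewrite (gtn_eqF (ltn_ord i)) mul0r.
Qed.

Section DeterminantFormula.

Variables (K : fieldType) (a D : nat -> K) (k : nat).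

Definition toeplitz_upper : 'M[{poly K}]_k.+1 :=
  \matrix_(i, j) (if (i <= j)%N then (D (j - i)%N)%:P else 0).

Lemma det_toeplitz_upper : \det toeplitz_upper = (D 0%N)%:P ^+ k.+1.
Proof.
rewrite -det_tr det_trig; last first.
  by apply/is_trig_mxP => i j hij; rewrite !mxE leqNgt hij.
rewrite (eq_bigr (fun=> (D 0%N)%:P)) ?prodr_const ?card_ord // => i _.
by rewrite !mxE leqnn subnn.
Qed.

Hypothesis aD1 : ps_mul a D = ps_one K.

Lemma Pmat_toeplitz_row (r j : 'I_k.+1) : r != 0 :> nat ->
  (Pmat a k *m toeplitz_upper) r j = (j.+1 == r)%:R.
Proof.
move=> r0; rewrite !mxE.
transitivity ((\sum_(i < k.+1) ((if (r.-1 <= i)%N then a (i - r.-1)%N else 0) *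
                (if (i <= j)%N then D (j - i)%N else 0)))%:P).
  rewrite rmorph_sum; apply: eq_bigr => i _; rewrite !mxE (negbTE r0).
  by case: (r.-1 <= i)%N; case: (i <= j)%N; rewrite ?rmorphM ?mulr0 ?mul0r ?rmorph0.
rewrite sum_shifted_conv // aD1 /ps_one; case: (val r) r0 => // r' _ /=.
rewrite eqSS; case: leqP => [hrj|hjr]; last by rewrite ltn_eqF.
by rewrite subn_eq0 eq_sym eqn_leq hrj polyC_natr.
Qed.

Lemma Pmat_toeplitz_corner :
  (Pmat a k *m toeplitz_upper) 0 ord_max
  = \sum_(j < k.+1) (a j * D (k - j)%N) *: 'X^j.
Proof.
rewrite !mxE; apply: eq_bigr => i _; rewrite !mxE /= leq_ord.
by rewrite -mulrA (mulrC 'X^i) mulrA -polyCM mul_polyC.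
Qed.

End DeterminantFormula.

Theorem proposition2p3 (K : fieldType) (a : nat -> K) (D : nat -> K) :
  a 0%N = 1 ->
  (* D is the coefficient sequence of 1/f, i.e. f * (sum_k D_k t^k) = 1 *)
  (forall n : nat, \sum_(i < n.+1) a i * D (n - i)%N = (n == 0%N)%:R) ->
  (* (a) *)
  (forall k : nat,
     Pfk a k = \sum_(j < k.+1) (a j * D (k - j)%N) *: 'X^j)
  /\
  (* (b): in A[[tau]], with x replaced by tau x *)
  (forall (A : algType K) (x y : A),
     let F : nat -> A := fun k => a k *: x ^+ k in
     let Y : nat -> A := fun k => if k == 0%N then y else 0 in
     let Z : nat -> A := fun k =>
       if k == 0%N then y
       else \sum_(i < k.+1) (a i * D (k - i)%N) *: (x ^+ i * y * x ^+ (k - i)%N) in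
     exists G : nat -> A,
       ps_mul F G = ps_one A /\ ps_mul G F = ps_one A /\
       ps_mul (ps_mul F Y) G = Z).
Proof.
move=> a0 hD.
have aD1 : ps_mul a D = ps_one K by apply: functional_extensionality.
have D0 : D 0%N = 1 by have := hD 0%N; rewrite big_ord1 a0 mul1r.
split=> [k | A x y F Y Z].
  have detU : \det (toeplitz_upper D k) = 1 by rewrite det_toeplitz_upper D0 expr1n.
  have detPU : \det (Pmat a k *m toeplitz_upper D k) = \det (Pmat a k).
    by rewrite det_mulmx detU mulr1.
  rewrite /Pfk -detPU (det_unit_rows_col_max (Pmat_toeplitz_row aD1)).
  by rewrite Pmat_toeplitz_corner signrMK.
exists (fun k => D k *: x ^+ k).
split; first by rewrite ps_mul_scaled_powers aD1 ps_one_scaled_powers.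
split; first by rewrite ps_mul_scaled_powers ps_mulC aD1 ps_one_scaled_powers.
rewrite ps_mul_const_r; apply: functional_extensionality => n; rewrite /ps_mul /Z.
have -> : \sum_(i < n.+1) a i *: x ^+ i * y * (D (n - i)%N *: x ^+ (n - i)%N)
  = \sum_(i < n.+1) (a i * D (n - i)%N) *: (x ^+ i * y * x ^+ (n - i)%N).
  by apply: eq_bigr => i _; rewrite -scalerAr -!scalerAl scalerA mulrC.
case: eqP => // ->.
by rewrite big_ord1 a0 D0 mul1r scale1r expr0 mul1r mulr1.
Qed.
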